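(* Let $(M,d)$ be a complete pointed metric space with $\gamma(M)>1$, where $\gamma(M)=\inf\{\frac{d(x,u)+d(u,y)}{d(x,y)}: x,u,y\in M\text{ distinct}\}$. Then every positive Radon measure $\mu$ on $\beta\widetilde{M}$ with $\|\mu\|=\|\Phi^*\mu\|$ is $\preccurlyeq$-minimal.
   Context: $\mathrm{Lip}_0(M)$: Lipschitz $f:M\to\mathbb{R}$ with $f(0)=0$ ($0$ the base point) normed by the Lipschitz constant. $\widetilde{M}=\{(x,y)\in M\times M:x\ne y\}$, $\beta\widetilde{M}$ its Stone–Čech compactification; Radon measures identified with $C(\beta\widetilde{M})^*$. $\Phi:\mathrm{Lip}_0(M)\to C(\beta\widetilde{M})$ maps $f$ to the continuous extension of $(x,y)\mapsto(f(x)-f(y))/d(x,y)$; $\Phi^*$ its adjoint. $G$ is the set of $g\in C(\beta\widetilde{M})$ with $d(x,y)g(x,y)\le d(x,u)g(x,u)+d(u,y)g(u,y)$ for all distinct $x,u,y\in M$; $\mu\preccurlyeq\nu$ iff $\int g\,d\mu\le\int g\,d\nu$ for all $g\in G$; $\mu$ is $\preccurlyeq$-minimal if every positive $\nu\preccurlyeq\mu$ satisfies $\mu\preccurlyeq\nu$. Throughout, $M$ has at least three distinct points. *)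

From mathcomp Require Import all_boot all_order all_algebra.
From mathcomp Require Import boolp classical_sets reals.
Set Implicit Arguments. Unset Strict Implicit. Unset Printing Implicit Defensive.
Import Order.TTheory GRing.Theory Num.Theory.
Local Open Scope ring_scope.
Local Open Scope classical_set_scope.

Section Defs.
Variables (R : realType) (M : Type) (d : M -> M -> R).

Definition is_metric : Prop :=
  [/\ forall x y, (d x y = 0) <-> x = y,
      forall x y, d x y = d y x &
      forall x y z, d x z <= d x y + d y z].

Definition d_cauchy (u : nat -> M) : Prop :=
  forall e : R, 0 < e -> exists N, forall m n, (N <= m)%N -> (N <= n)%N -> d (u m) (u n) < e.
Definition d_converges (u : nat -> M) (l : M) : Prop :=
  forall e : R, 0 < e -> exists N, forall n, (N <= n)%N -> d (u n) l < e.
Definition complete_metric : Prop :=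
  forall u, d_cauchy u -> exists l, d_converges u l.

Definition gammaM : R :=
  inf [set r | exists x u y, [/\ x <> u, u <> y, x <> y &
                  r = (d x u + d u y) / d x y]].

(** Functions on Mtilde = {(x,y) : x <> y} are represented as M -> M -> R;
    only their values off the diagonal matter.  C(beta Mtilde) is identified
    (isometrically, via the universal property of the Stone-Cech
    compactification) with Cb(Mtilde), the bounded continuous functions on
    Mtilde (Mtilde carrying the product-metric topology). *)
Definition Cb (g : M -> M -> R) : Prop :=
  (exists C : R, forall x y, x <> y -> `|g x y| <= C) /\
  (forall x y, x <> y -> forall e : R, 0 < e -> exists2 dl : R, 0 < dl &
     forall x' y', x' <> y' -> d x x' < dl -> d y y' < dl ->
       `|g x' y' - g x y| < e).

Definition sup_le (g : M -> M -> R) (c : R) : Prop :=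
  forall x y, x <> y -> `|g x y| <= c.

(** Radon measures on beta Mtilde = C(beta Mtilde)^* = Cb(Mtilde)^*:
    continuous linear functionals (their values outside Cb are irrelevant). *)
Definition radon (mu : (M -> M -> R) -> R) : Prop :=
  (forall (a : R) g h, Cb g -> Cb h ->
      mu (fun x y => a * g x y + h x y) = a * mu g + mu h) /\
  (exists K : R, forall g c, Cb g -> sup_le g c -> `|mu g| <= K * c).

Definition positive_radon (mu : (M -> M -> R) -> R) : Prop :=
  radon mu /\
  forall g, Cb g -> (forall x y, x <> y -> 0 <= g x y) -> 0 <= mu g.

Definition mnorm (mu : (M -> M -> R) -> R) : R :=
  sup [set r | exists g, [/\ Cb g, sup_le g 1 & r = `|mu g|]].

Definition lip_ball1 (p : M) (f : M -> R) : Prop :=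
  f p = 0 /\ forall x y, `|f x - f y| <= d x y.

Definition Phi (f : M -> R) : M -> M -> R := fun x y => (f x - f y) / d x y.

Definition Phistar_norm (p : M) (mu : (M -> M -> R) -> R) : R :=
  sup [set r | exists f, lip_ball1 p f /\ r = `|mu (Phi f)|].

Definition in_G (g : M -> M -> R) : Prop :=
  Cb g /\ forall x u y, x <> u -> u <> y -> x <> y ->
    d x y * g x y <= d x u * g x u + d u y * g u y.

Definition preceq (mu nu : (M -> M -> R) -> R) : Prop :=
  forall g, in_G g -> mu g <= nu g.

Definition preceq_minimal (mu : (M -> M -> R) -> R) : Prop :=
  forall nu, positive_radon nu -> preceq nu mu -> preceq mu nu.

End Defs.

From Pilot Require Import Defs.
From mathcomp Require Import all_boot all_order all_algebra.
From mathcomp Require Import boolp classical_sets reals.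
From mathcomp Require Import ring lra.
Set Implicit Arguments. Unset Strict Implicit. Unset Printing Implicit Defensive.
Import Order.TTheory GRing.Theory Num.Theory.
Local Open Scope ring_scope.

(* If [nu] is positive and [nu ≼ mu], then [nu] and [mu] agree on every
   [Phi f], because both [Phi f] and [- Phi f] lie in the cone [G].  Hence
     mu(1) <= ||mu|| = ||Phi^* mu|| = sup_f |nu(Phi f)| <= nu(1),
   while [1 ∈ G] gives nu(1) <= mu(1).  Finally, when gamma(M) > 1 the cone
   absorbs bounded continuous functions: [c - g ∈ G] for [c] large enough, so
   nu(c - g) <= mu(c - g) together with nu(1) = mu(1) yields mu(g) <= nu(g). *)

Section BoundedContinuous.
Variables (R : realType) (M : Type) (d : M -> M -> R).

Lemma Cb_cst c : Cb d (fun _ _ => c).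
Proof.
split; first by exists `|c|.
by move=> x y _ e e0; exists 1 => // *; rewrite subrr normr0.
Qed.

Lemma CbZ a g : Cb d g -> Cb d (fun x y => a * g x y).
Proof.
move=> [[C gC] g_cont]; split.
  by exists (`|a| * C) => x y xy; rewrite normrM ler_wpM2l ?gC.
move=> x y xy e e0.
have a1_gt0 : 0 < `|a| + 1 by rewrite ltr_pwDr.
have [dl dl0 g_near] := g_cont x y xy _ (divr_gt0 e0 a1_gt0).
exists dl => // x' y' x'y' xx' yy'.
have := g_near _ _ x'y' xx' yy'; rewrite -mulrBr normrM ltr_pdivlMr //.
have := normr_ge0 a; have := normr_ge0 (g x' y' - g x y); nra.
Qed.

Lemma CbD g h : Cb d g -> Cb d h -> Cb d (fun x y => g x y + h x y).
Proof.
move=> [[Cg gC] g_cont] [[Ch hC] h_cont]; split.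
  exists (Cg + Ch) => x y xy.
  exact: le_trans (ler_normD _ _) (lerD (gC _ _ xy) (hC _ _ xy)).
move=> x y xy e e0.
have e2_gt0 : 0 < e / 2 by rewrite divr_gt0.
have [dg dg0 g_near] := g_cont x y xy _ e2_gt0.
have [dh dh0 h_near] := h_cont x y xy _ e2_gt0.
exists (Num.min dg dh); first by rewrite lt_min dg0 dh0.
move=> x' y' x'y'; rewrite !lt_min => /andP[xg xh] /andP[yg yh].
have := g_near _ _ x'y' xg yg; have := h_near _ _ x'y' xh yh.
have -> : g x' y' + h x' y' - (g x y + h x y) =
  (g x' y' - g x y) + (h x' y' - h x y) by ring.
have := ler_normD (g x' y' - g x y) (h x' y' - h x y); lra.
Qed.

Lemma CbB g h : Cb d g -> Cb d h -> Cb d (fun x y => g x y - h x y).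
Proof.
move=> Cg Ch; suff -> : (fun x y => g x y - h x y) = fun x y => g x y + -1 * h x y.
  exact: CbD Cg (CbZ (-1) Ch).
by apply/funeq2P => x y; rewrite mulN1r.
Qed.

End BoundedContinuous.

#[local] Hint Resolve Cb_cst : core.

Section RadonMeasure.
Variables (R : realType) (M : Type) (d : M -> M -> R) (nu : (M -> M -> R) -> R).
Hypothesis nuR : radon d nu.

Lemma radon0 : nu (fun _ _ => 0) = 0.
Proof.
suff : nu (fun _ _ => 0) = 1 * nu (fun _ _ => 0) + nu (fun _ _ => 0) by lra.
have [nu_lin _] := nuR; rewrite -nu_lin //; congr nu.
by apply/funeq2P => x y /=; rewrite mul1r addr0.
Qed.

Lemma radonZ a g : Cb d g -> nu (fun x y => a * g x y) = a * nu g.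
Proof.
move=> Cg; have [nu_lin _] := nuR.
rewrite -[a * nu g]addr0 -radon0 -nu_lin //; congr nu.
by apply/funeq2P => x y /=; rewrite addr0.
Qed.

Lemma radonB g h : Cb d g -> Cb d h ->
  nu (fun x y => g x y - h x y) = nu g - nu h.
Proof.
move=> Cg Ch; have [nu_lin _] := nuR.
rewrite addrC -[- nu h]mulN1r -nu_lin //; congr nu.
by apply/funeq2P => x y; rewrite mulN1r addrC.
Qed.

Lemma radon_cst c : nu (fun _ _ => c) = c * nu (fun _ _ => 1).
Proof.
rewrite -radonZ //; congr nu.
by apply/funeq2P => x y /=; rewrite mulr1.
Qed.

End RadonMeasure.

Lemma positive_radon_le (R : realType) (M : Type) (d : M -> M -> R) nu g h :
  positive_radon d nu -> Cb d g -> Cb d h ->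
  (forall x y, x <> y -> g x y <= h x y) -> nu g <= nu h.
Proof.
move=> [nuR nu_ge0] Cg Ch gh; rewrite -subr_ge0 -(radonB nuR) //.
by apply: nu_ge0 => [|x y xy]; [exact: CbB | rewrite subr_ge0 gh].
Qed.

Lemma positive_radon_normr_le (R : realType) (M : Type) (d : M -> M -> R) nu g c :
  positive_radon d nu -> Cb d g -> Defs.sup_le g c ->
  `|nu g| <= c * nu (fun _ _ => 1).
Proof.
move=> nu_pos Cg gc; have [nuR _] := nu_pos.
rewrite ler_norml -mulNr -!(radon_cst nuR).
by apply/andP; split; apply: (positive_radon_le nu_pos) => // x y /gc;
  rewrite ler_norml => /andP[].
Qed.

Lemma radon_normr_le_mnorm (R : realType) (M : Type) (d : M -> M -> R) mu g :
  radon d mu -> Cb d g -> Defs.sup_le g 1 -> `|mu g| <= mnorm d mu.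
Proof.
move=> [_ [K muK]] Cg g1; apply: sup_upper_bound; last by exists g.
split; first by exists `|mu g|, g.
by exists K => _ [h [Ch h1 ->]]; rewrite -[K]mulr1; exact: muK.
Qed.

Section Metric.
Variables (R : realType) (M : Type) (d : M -> M -> R).
Hypothesis dM : is_metric d.

Lemma d_ge0 x y : 0 <= d x y.
Proof.
have [d0 dC dT] := dM; have := dT x y x.
by rewrite (proj2 (d0 x x) erefl) (dC y x); lra.
Qed.

Lemma d_gt0 x y : x <> y -> 0 < d x y.
Proof.
have [d0 _ _] := dM.
by move=> xy; rewrite lt_def d_ge0 andbT; apply/eqP => /d0.
Qed.

Lemma dist_diff_le x y x' y' : `|d x' y' - d x y| <= d x x' + d y y'.
Proof.
have [_ dC dT] := dM; rewrite ler_norml.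
have := dT x' x y'; have := dT x y y'; have := dT x x' y; have := dT x' y' y.
by rewrite (dC x' x) (dC y' y); lra.
Qed.

Lemma gammaM_mul_le x u y : x <> u -> u <> y -> x <> y ->
  gammaM d * d x y <= d x u + d u y.
Proof.
move=> xu uy xy; rewrite -ler_pdivlMr ?d_gt0 //; apply: ge_inf; last by exists x, u, y.
by exists 0 => _ [x' [u' [y' [_ _ _ ->]]]]; rewrite divr_ge0 ?addr_ge0 ?d_ge0.
Qed.

Lemma Phistar_norm_le p mu c :
  (forall f, lip_ball1 d p f -> `|mu (Phi d f)| <= c) -> Phistar_norm d p mu <= c.
Proof.
move=> mu_c; apply: ge_sup => [|_ [f [fL ->]]]; last exact: mu_c.
exists `|mu (Phi d (fun _ => 0))|, (fun _ => 0); split=> //.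
by split=> // x y; rewrite subrr normr0 d_ge0.
Qed.

Section Lipschitz.
Variables (p : M) (f : M -> R).
Hypothesis fL : lip_ball1 d p f.

Lemma d_mul_Phi x y : x <> y -> d x y * Phi d f x y = f x - f y.
Proof. by move=> xy; rewrite mulrC divfK ?gt_eqF ?d_gt0. Qed.

Lemma Phi_sup_le1 : Defs.sup_le (Phi d f) 1.
Proof.
move=> x y xy; rewrite /Phi normrM normfV (ger0_norm (d_ge0 x y)).
by rewrite ler_pdivrMr ?d_gt0 // mul1r; exact: fL.2.
Qed.

Lemma Phi_diff_le x y x' y' : x <> y -> x' <> y' ->
  `|Phi d f x' y' - Phi d f x y| * d x' y' <= 2 * (d x x' + d y y').
Proof.
move=> xy x'y'; have [_ dC _] := dM.
rewrite -[d x' y' in X in X <= _]ger0_norm ?d_ge0 // -normrM.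
have -> : (Phi d f x' y' - Phi d f x y) * d x' y' =
    (f x' - f x) - (f y' - f y) - Phi d f x y * (d x' y' - d x y).
  rewrite mulrBl [Phi d f x' y' * _]mulrC d_mul_Phi // mulrBr.
  by rewrite [Phi d f x y * d x y]mulrC d_mul_Phi //; ring.
have fx : `|f x' - f x| <= d x x' by rewrite dC; exact: fL.2.
have fy : `|f y' - f y| <= d y y' by rewrite dC; exact: fL.2.
have Phi_dd : `|Phi d f x y * (d x' y' - d x y)| <= d x x' + d y y'.
  rewrite normrM -[X in _ <= X]mul1r.
  by apply: ler_pM => //; [exact: Phi_sup_le1 | exact: dist_diff_le].
have := ler_normB (f x' - f x - (f y' - f y)) (Phi d f x y * (d x' y' - d x y)).
have := ler_normB (f x' - f x) (f y' - f y); lra.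
Qed.

Lemma Cb_Phi : Cb d (Phi d f).
Proof.
split; first by exists 1; exact: Phi_sup_le1.
move=> x y xy e e0; have D_gt0 := d_gt0 xy.
exists (Num.min (d x y / 4) (e * d x y / 8)); first by rewrite lt_min !divr_gt0 ?mulr_gt0.
move=> x' y' x'y'; rewrite !lt_min => /andP[xx'1 xx'2] /andP[yy'1 yy'2].
have D'_gt0 := d_gt0 x'y'.
have D'_ge : d x y / 2 < d x' y'.
  by have := dist_diff_le x y x' y'; rewrite ler_norml; lra.
rewrite -(ltr_pM2r D'_gt0); apply: le_lt_trans (Phi_diff_le xy x'y') _.
have : e * (d x y / 2) < e * d x' y' by rewrite ltr_pM2l.
lra.
Qed.

End Lipschitz.

Lemma in_G_cst c : 0 <= c -> in_G d (fun _ _ => c).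
Proof.
move=> c_ge0; split=> [|x u y _ _ _]; first exact: Cb_cst.
by have [_ _ dT] := dM; rewrite -mulrDl ler_wpM2r.
Qed.

Lemma in_G_Phi p f a : lip_ball1 d p f -> in_G d (fun x y => a * Phi d f x y).
Proof.
move=> fL; split=> [|x u y xu uy xy]; first exact: CbZ (Cb_Phi fL).
by rewrite ![d _ _ * (a * _)]mulrCA !d_mul_Phi //; lra.
Qed.

(* As [gammaM d > 1], the defect [d x u + d u y - d x y] is at least
   [(1 - 1 / gammaM d) (d x u + d u y)], so for [c] large it dominates the
   variation of [g], which is at most [2 B (d x u + d u y)]. *)
Lemma in_G_absorbs g : 1 < gammaM d -> Cb d g ->
  exists c, in_G d (fun x y => c - g x y).
Proof.
move=> gam_gt1 Cg; have [[B gB] _] := Cg.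
have gam_gt0 : 0 < gammaM d by apply: lt_trans gam_gt1.
pose c := 2 * B * gammaM d / (gammaM d - 1).
exists c; split; first exact: CbB (Cb_cst d c) Cg.
move=> x u y xu uy xy.
have B_ge0 : 0 <= B by apply: le_trans (gB x y xy).
have c_ge0 : 0 <= c by rewrite /c divr_ge0 ?subr_ge0 ?(ltW gam_gt1) // !mulr_ge0 // ltW.
have c_gam : c * (gammaM d - 1) = 2 * B * gammaM d.
  by rewrite /c divfK // subr_eq0 gt_eqF.
have gB_mul a v w : 0 <= a -> v <> w -> - (B * a) <= a * g v w <= B * a.
  move=> a_ge0 vw; rewrite -ler_norml normrM ger0_norm // mulrC.
  by rewrite ler_wpM2r ?gB.
have /andP[gxy _] := gB_mul _ _ _ (d_ge0 x y) xy.
have /andP[_ gxu] := gB_mul _ _ _ (d_ge0 x u) xu.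
have /andP[_ guy] := gB_mul _ _ _ (d_ge0 u y) uy.
have gam_le := gammaM_mul_le xu uy xy.
have t_le : d x y <= d x u + d u y.
  by apply: le_trans gam_le; rewrite ler_peMl ?d_ge0 ?ltW.
have defect : 2 * B * (d x u + d u y) <= c * (d x u + d u y - d x y).
  rewrite -(ler_pM2l gam_gt0).
  have -> : gammaM d * (c * (d x u + d u y - d x y)) =
    c * (gammaM d - 1) * (d x u + d u y) + c * (d x u + d u y - gammaM d * d x y).
    by ring.
  have : 0 <= c * (d x u + d u y - gammaM d * d x y) by rewrite mulr_ge0 ?subr_ge0.
  rewrite c_gam; lra.
have : B * d x y <= B * (d x u + d u y) by rewrite ler_wpM2l.
lra.
Qed.

Lemma preceq_Phi_eq p nu mu f : radon d nu -> radon d mu -> preceq d nu mu ->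
  lip_ball1 d p f -> nu (Phi d f) = mu (Phi d f).
Proof.
move=> nuR muR nu_mu fL; have CP := Cb_Phi fL.
have := nu_mu _ (in_G_Phi 1 fL); have := nu_mu _ (in_G_Phi (-1) fL).
rewrite !(radonZ nuR, radonZ muR) // !mul1r !mulN1r lerN2 => mu_le nu_le.
by apply/le_anti/andP.
Qed.

Lemma norming_radon_cst1_le p nu mu : positive_radon d nu -> radon d mu ->
  (forall f, lip_ball1 d p f -> nu (Phi d f) = mu (Phi d f)) ->
  mnorm d mu = Phistar_norm d p mu ->
  mu (fun _ _ => 1) <= nu (fun _ _ => 1).
Proof.
move=> nu_pos muR nu_mu mu_norming.
apply: le_trans (ler_norm _) _; apply: le_trans (radon_normr_le_mnorm muR _ _) _.
- exact: Cb_cst.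
- by move=> x y _; rewrite normr1.
rewrite mu_norming; apply: Phistar_norm_le => f fL; rewrite -nu_mu // -[X in _ <= X]mul1r.
exact/positive_radon_normr_le/Phi_sup_le1/fL/Cb_Phi/fL.
Qed.

End Metric.

Theorem corollary3p18 (R : realType) (M : Type) (d : M -> M -> R) (p : M)
  (Hmet : is_metric d) (Hcomp : complete_metric d)
  (H3 : exists x u y : M, [/\ x <> u, u <> y & x <> y])
  (Hgamma : 1 < gammaM d)
  (mu : (M -> M -> R) -> R) (Hmu : positive_radon d mu)
  (Hnorm : mnorm d mu = Phistar_norm d p mu) :
  preceq_minimal d mu.
Proof.
move=> nu nu_pos nu_mu g [Cg _]; have [nuR _] := nu_pos; have [muR _] := Hmu.
have one_eq : nu (fun _ _ => 1) = mu (fun _ _ => 1).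
  apply/le_anti/andP; split; first exact/nu_mu/in_G_cst.
  by apply: norming_radon_cst1_le Hnorm => // f; exact: preceq_Phi_eq.
have [c Gc] := in_G_absorbs Hmet Hgamma Cg.
have := nu_mu _ Gc; rewrite (radonB nuR) ?(radonB muR) //.
rewrite (radon_cst nuR c) (radon_cst muR c) one_eq.
lra.
Qed.
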